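(* Let $X$ be a finite cycle set and $x\in X$. The following are equivalent: (1) $X=\langle x\rangle$; (2) there is a finite brace $B$ such that $X\subseteq B$ (with the cycle set structure of $X$ being the one induced from $B$), $X=\{\lambda_b(x) : b\in B\}$, and $B=B(x)$.
   Context: A cycle set is a non-empty set $X$ with one operation $\cdot$ such that each $\sigma_x:y\mapsto x\cdot y$ is bijective and $(x\cdot y)\cdot(x\cdot z)=(y\cdot x)\cdot(y\cdot z)$ for all $x,y,z$. A sub-cycle set is a subset that is again a cycle set under the restricted operation; $\langle x\rangle$ is the smallest sub-cycle set containing $x$. A brace is a triple $(B,+,\circ)$ with $(B,+)$ an abelian group, $(B,\circ)$ a group, and $a\circ(b+c)=a\circ b-a+a\circ c$; $\lambda_a(b):=-a+a\circ b$, $a^-$ is the inverse of $a$ in $(B,\circ)$, and $B$ is a cycle set via $a\cdot b:=\lambda_{a^-}(b)$. $B(x)$ is the smallest subset of $B$ containing $x$ that is a subgroup of both $(B,+)$ and $(B,\circ)$. *)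

From HB Require Import structures.
From mathcomp Require Import all_boot.
Set Implicit Arguments. Unset Strict Implicit. Unset Printing Implicit Defensive.

Definition is_cycle_set (X : Type) (op : X -> X -> X) : Prop :=
  (forall x, bijective (op x)) /\
  (forall x y z, op (op x y) (op x z) = op (op y x) (op y z)).

(* S is a sub-cycle set: non-empty, closed under op, and each restricted
   sigma_x (x in S) is a bijection S -> S.  (The cycle-set identity is
   inherited from X.) *)
Definition sub_cycle_set (X : finType) (op : X -> X -> X) (S : {set X}) : bool :=
  [&& S != set0,
      [forall x in S, forall y in S, op x y \in S],
      [forall x in S, forall y in S, forall z in S, (op x y == op x z) ==> (y == z)] &
      [forall x in S, forall y in S, exists z in S, op x z == y]].

Definition cs_gen (X : finType) (op : X -> X -> X) (x : X) : {set X} :=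
  \bigcap_(S : {set X} | sub_cycle_set op S && (x \in S)) S.

Record brace := Brace {
  bT :> finType;
  badd : bT -> bT -> bT;
  bopp : bT -> bT;
  bzero : bT;
  bcirc : bT -> bT -> bT;
  binv : bT -> bT;
  bone : bT;
  baddA : forall a b c, badd a (badd b c) = badd (badd a b) c;
  baddC : forall a b, badd a b = badd b a;
  badd0 : forall a, badd bzero a = a;
  baddN : forall a, badd (bopp a) a = bzero;
  bcircA : forall a b c, bcirc a (bcirc b c) = bcirc (bcirc a b) c;
  bcirc1 : forall a, bcirc bone a = a;
  bcircV : forall a, bcirc (binv a) a = bone;
  bdistr : forall a b c,
    bcirc a (badd b c) = badd (badd (bcirc a b) (bopp a)) (bcirc a c)
}.

Definition blambda (B : brace) (a b : B) : B := badd (bopp a) (bcirc a b).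

Definition bcs_op (B : brace) (a b : B) : B := blambda (binv a) b.

Definition bi_subgroup (B : brace) (S : {set B}) : bool :=
  [&& bzero B \in S, [forall a in S, forall b in S, badd a b \in S],
      [forall a in S, bopp a \in S],
      bone B \in S, [forall a in S, forall b in S, bcirc a b \in S] &
      [forall a in S, binv a \in S]].

Definition brace_gen (B : brace) (x : B) : {set B} :=
  \bigcap_(S : {set B} | bi_subgroup S && (x \in S)) S.

From HB Require Import structures.
From mathcomp Require Import all_boot fingroup perm ssralg zmodp zify.
Set Implicit Arguments. Unset Strict Implicit. Unset Printing Implicit Defensive.
Import GRing.Theory.

(* (2) => (1): for a sub-cycle set S containing x, the image Y of S is stable
   under every lambda_y with y in Y.  The additive monoid spanned by Y is then
   stable under lambda, hence under the circle product, so by finiteness it is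
   a subgroup of both (B,+) and (B,o).  It contains x, so it is B(x) = B, and
   X = lambda_B(x) lies in Y.
   (1) => (2): X embeds, via y |-> e_y, in the structure brace of X taken
   modulo a multiple of |Sym X|!, which is still a brace because the
   permutation sigma_a attached to a in N^(X) depends only on the
   multiplicities of a modulo |Sym X|! once they exceed |Sym X|.  The elements
   y with e_y in lambda_{B(e_x)}(e_x) form a sub-cycle set containing x, hence
   all of X, and B(e_x) is the required brace. *)

Section BraceArithmetic.
Variable B : brace.
Implicit Types a b c : B.
Local Notation "a +' b" := (badd a b) (at level 50, left associativity).
Local Notation "-' a" := (bopp a) (at level 35).
Local Notation "a *' b" := (bcirc a b) (at level 40, left associativity).
Local Notation "0'" := (bzero B).
Local Notation lam := (@blambda B).

Lemma badd0r a : a +' 0' = a.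
Proof. by rewrite baddC badd0. Qed.

Lemma baddNr a : a +' -' a = 0'.
Proof. by rewrite baddC baddN. Qed.

Lemma baddKl a b : -' a +' (a +' b) = b.
Proof. by rewrite baddA baddN badd0. Qed.

Lemma baddKr a b : a +' (-' a +' b) = b.
Proof. by rewrite baddA baddNr badd0. Qed.

Lemma baddI a : injective (badd a).
Proof. by move=> b c e; rewrite -(baddKl a b) e baddKl. Qed.

Lemma baddCA a b c : a +' (b +' c) = b +' (a +' c).
Proof. by rewrite !baddA (baddC a). Qed.

Lemma bopp0 : -' 0' = 0'.
Proof. by have := baddN 0'; rewrite badd0r. Qed.

Lemma boppK a : -' (-' a) = a.
Proof. by apply: (@baddI (-' a)); rewrite baddN baddNr. Qed.

Lemma boppD a b : -' (a +' b) = -' a +' -' b.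
Proof.
apply: (@baddI (a +' b)); rewrite baddNr baddA -(baddA a b) (baddC b).
by rewrite baddA baddNr badd0 baddNr.
Qed.

Lemma bcirc0r a : a *' 0' = a.
Proof.
have e : a *' 0' +' 0' = a *' 0' +' (-' a +' a *' 0').
  by rewrite badd0r baddA -bdistr badd0.
by move/baddI/(congr1 (badd a)): e; rewrite badd0r baddKr.
Qed.

Lemma bone_zero : bone B = 0'.
Proof. by rewrite -[LHS](bcirc0r (bone B)) bcirc1. Qed.

Lemma bcirc1r a : a *' bone B = a.
Proof. by rewrite bone_zero bcirc0r. Qed.

Lemma bcircI a : injective (bcirc a).
Proof. by move=> b c e; rewrite -(bcirc1 b) -(bcircV a) -bcircA e bcircA bcircV bcirc1. Qed.

Lemma bcircVr a : a *' binv a = bone B.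
Proof. by apply: (@bcircI (binv a)); rewrite bcircA bcircV bcirc1 bcirc1r. Qed.

Lemma bcircE a b : a *' b = a +' lam a b.
Proof. by rewrite /blambda baddKr. Qed.

Lemma blambdaD a b c : lam a (b +' c) = lam a b +' lam a c.
Proof. by rewrite /blambda bdistr -!baddA; congr (_ +' _); rewrite baddA. Qed.

Lemma blambda0 a : lam a 0' = 0'.
Proof. by rewrite /blambda bcirc0r baddN. Qed.

Lemma blambdaN a b : lam a (-' b) = -' lam a b.
Proof. by apply: (@baddI (lam a b)); rewrite -blambdaD !baddNr blambda0. Qed.

Lemma blambdaM a b c : lam (a *' b) c = lam a (lam b c).
Proof.
rewrite [lam b c]/blambda blambdaD blambdaN /blambda boppD boppK bcircA.
by rewrite -baddA baddCA baddKr.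
Qed.

Lemma blambda1 c : lam (bone B) c = c.
Proof. by rewrite /blambda bcirc1 bone_zero bopp0 badd0. Qed.

Lemma blambdaK a c : lam a (lam (binv a) c) = c.
Proof. by rewrite -blambdaM bcircVr blambda1. Qed.

Lemma blambdaVK a c : lam (binv a) (lam a c) = c.
Proof. by rewrite -blambdaM bcircV blambda1. Qed.

Lemma blambda_inj a : injective (lam a).
Proof. by move=> b c e; rewrite -(blambdaVK a b) e blambdaVK. Qed.

End BraceArithmetic.

Lemma bi_subgroupP (B : brace) (S : {set B}) :
  reflect ([/\ bzero B \in S, {in S &, forall a b, badd a b \in S} &
               {in S, forall a, bopp a \in S}] /\
           [/\ bone B \in S, {in S &, forall a b, bcirc a b \in S} &
               {in S, forall a, binv a \in S}])
          (bi_subgroup S).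
Proof.
apply: (iffP and5P).
  case=> S0 /'forall_implyP SD /'forall_implyP SN S1.
  case/andP=> /'forall_implyP SM /'forall_implyP SV.
  split; split=> //.
  - by move=> a b aS bS; have /'forall_implyP := SD a aS; apply.
  - by move=> a b aS bS; have /'forall_implyP := SM a aS; apply.
case=> [[S0 SD SN] [S1 SM SV]]; split=> //; try apply/andP; try split.
- by apply/'forall_implyP=> a aS; apply/'forall_implyP=> b; apply: SD.
- by apply/'forall_implyP.
- by apply/'forall_implyP=> a aS; apply/'forall_implyP=> b; apply: SM.
- by apply/'forall_implyP.
Qed.

Lemma bi_subgroup_blambda (B : brace) (S : {set B}) :
  bi_subgroup S -> {in S &, forall a b, blambda a b \in S}.
Proof.
case/bi_subgroupP=> [[_ SD SN] [_ SM _]] a b aS bS.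
by apply: SD; [apply: SN | apply: SM].
Qed.

Lemma brace_gen_min (B : brace) (x : B) (S : {set B}) :
  bi_subgroup S -> x \in S -> brace_gen x \subset S.
Proof. by move=> Sbi xS; apply: bigcap_inf; rewrite Sbi xS. Qed.

Lemma mem_brace_gen (B : brace) (x : B) : x \in brace_gen x.
Proof. by apply/bigcapP=> S /andP[]. Qed.

Lemma brace_gen_bi_subgroup (B : brace) (x : B) : bi_subgroup (brace_gen x).
Proof.
apply/bi_subgroupP; split; split=> [|a b aG bG|a aG];
  apply/bigcapP=> S SP; have /andP[/bi_subgroupP[[S0 SD SN] [S1 SM SV]] _] := SP;
  have inS c : c \in brace_gen x -> c \in S by move/bigcapP; apply.
- exact: S0.
- exact: SD (inS _ aG) (inS _ bG).
- exact: SN (inS _ aG).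
- exact: S1.
- exact: SM (inS _ aG) (inS _ bG).
- exact: SV (inS _ aG).
Qed.

Lemma closed_inj_onto (T : finType) (C : {set T}) (g : T -> T) :
  injective g -> {in C, forall t, g t \in C} ->
  {in C, forall u, exists2 t, t \in C & g t = u}.
Proof.
move=> ginj gC u uC.
have gCE : g @: C = C.
  apply/eqP; rewrite eqEcard (card_imset _ ginj) leqnn andbT.
  by apply/subsetP=> _ /imsetP[t tC ->]; apply: gC.
by move: uC; rewrite -{1}gCE => /imsetP[t tC ->]; exists t.
Qed.

Section AdditiveSpan.
Variables (B : brace) (Y : {set B}).

Definition addspan : {set B} :=
  \bigcap_(T : {set B} | (bzero B \in T) && [forall t in T, forall y in Y, badd t y \in T]) T.

Lemma addspan_ind (T : {set B}) : bzero B \in T ->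
  {in T & Y, forall t y, badd t y \in T} -> addspan \subset T.
Proof.
move=> T0 TD; apply: bigcap_inf; rewrite T0 /=.
by apply/'forall_implyP=> t tT; apply/'forall_implyP=> y; apply: TD.
Qed.

Lemma addspan0 : bzero B \in addspan.
Proof. by apply/bigcapP=> T /andP[]. Qed.

Lemma addspanDr : {in addspan & Y, forall t y, badd t y \in addspan}.
Proof.
move=> t y /bigcapP tC yY; apply/bigcapP=> T /andP[T0 TD].
by have /'forall_implyP := implyP (forallP TD t) (tC T (introT andP (conj T0 TD))); apply.
Qed.

Lemma addspanD : {in addspan &, forall a b, badd a b \in addspan}.
Proof.
move=> a b aC bC.
have : addspan \subset [set b | badd a b \in addspan].
  apply: addspan_ind => [|t y]; rewrite !inE ?badd0r // => atC yY.
  by rewrite baddA addspanDr.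
by move/subsetP/(_ b bC); rewrite inE.
Qed.

Lemma subset_addspan : Y \subset addspan.
Proof. by apply/subsetP=> y yY; rewrite -(badd0 y) addspanDr ?addspan0. Qed.

Hypothesis Y_blambda : {in Y &, forall y w, blambda y w \in Y}.

Lemma addspan_blambda : {in addspan & Y, forall c w, blambda c w \in Y}.
Proof.
suff : addspan \subset [set c | [forall w in Y, blambda c w \in Y]].
  by move=> /subsetP sub c w /sub; rewrite inE => /'forall_implyP; apply.
apply: addspan_ind => [|t y]; rewrite !inE.
  by apply/'forall_implyP=> w; rewrite -bone_zero blambda1.
move=> /'forall_implyP tY yY; apply/'forall_implyP=> w wY.
(* lambda_t permutes Y, so y = lambda_t v and t + y = t o v. *)
have [v vY <-] := closed_inj_onto (@blambda_inj _ t) tY yY.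
by rewrite -bcircE blambdaM tY ?Y_blambda.
Qed.

Lemma addspan_blambda_closed : {in addspan &, forall a b, blambda a b \in addspan}.
Proof.
move=> a b aC bC.
have : addspan \subset [set b | blambda a b \in addspan].
  apply: addspan_ind => [|t y]; rewrite !inE ?blambda0 ?addspan0 // => atC yY.
  by rewrite blambdaD addspanD // (subsetP subset_addspan) ?addspan_blambda.
by move/subsetP/(_ b bC); rewrite inE.
Qed.

Lemma addspan_bi_subgroup : bi_subgroup addspan.
Proof.
have addspanM : {in addspan &, forall a b, bcirc a b \in addspan}.
  by move=> a b aC bC; rewrite bcircE addspanD ?addspan_blambda_closed.
apply/bi_subgroupP; split; split; rewrite ?bone_zero ?addspan0 //.
- exact: addspanD.
- move=> a aC; have addaI : injective (fun t => badd t a).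
    by move=> t1 t2 /= e; apply: (@baddI _ a); rewrite !(baddC a).
  have [t tC e] := closed_inj_onto addaI (fun t tC => addspanD tC aC) addspan0.
  by rewrite -(badd0 (bopp a)) -e -baddA baddNr badd0r.
- move=> a aC; have [t tC e] := closed_inj_onto (@bcircI _ a) (addspanM a^~ aC) addspan0.
  by rewrite -(bcirc1r (binv a)) bone_zero -e bcircA bcircV bcirc1.
Qed.

End AdditiveSpan.

Lemma sub_cycle_setP (X : finType) (op : X -> X -> X) (S : {set X}) :
  reflect [/\ S != set0, {in S &, forall y z, op y z \in S},
              {in S & &, forall y z w, op y z = op y w -> z = w} &
              {in S &, forall y w, exists2 z, z \in S & op y z = w}]
          (sub_cycle_set op S).
Proof.
apply: (iffP and4P) => -[S0 Sop Sinj Ssurj]; split=> //.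
- by move=> y z yS zS; have /'forall_implyP := implyP (forallP Sop y) yS; apply.
- move=> y z w yS zS wS /eqP e; have /'forall_implyP := implyP (forallP Sinj y) yS.
  by move=> /(_ z zS) /'forall_implyP /(_ w wS) /implyP /(_ e) /eqP.
- move=> y w yS wS; have /'forall_implyP := implyP (forallP Ssurj y) yS.
  by move=> /(_ w wS) /exists_inP[z zS /eqP]; exists z.
- by apply/'forall_implyP=> y yS; apply/'forall_implyP=> z; apply: Sop.
- apply/'forall_implyP=> y yS; apply/'forall_implyP=> z zS; apply/'forall_implyP=> w wS.
  by apply/implyP=> /eqP /Sinj -> //.
- apply/'forall_implyP=> y yS; apply/'forall_implyP=> w wS.
  by have [z zS e] := Ssurj y w yS wS; apply/exists_inP; exists z; rewrite ?e.
Qed.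

Lemma cs_gen_min (X : finType) (op : X -> X -> X) (x : X) (S : {set X}) :
  sub_cycle_set op S -> x \in S -> cs_gen op x \subset S.
Proof. by move=> Scs xS; apply: bigcap_inf; rewrite Scs xS. Qed.

Lemma blambda_image_sub_cycle_set (X : finType) (op : X -> X -> X) (B : brace)
    (f : X -> B) (S : {set X}) :
  (forall y z, f (op y z) = bcs_op (f y) (f z)) -> sub_cycle_set op S ->
  {in f @: S &, forall y w, blambda y w \in f @: S}.
Proof.
move=> fhom /sub_cycle_setP[_ _ _ Ssurj] _ _ /imsetP[s sS ->] /imsetP[t tS ->].
have [z zS <-] := Ssurj s t sS tS.
by rewrite fhom /bcs_op blambdaK imset_f.
Qed.

Lemma cs_gen_of_brace (X : finType) (op : X -> X -> X) (x : X) (B : brace) (f : X -> B) :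
  injective f -> (forall y z, f (op y z) = bcs_op (f y) (f z)) ->
  f @: [set: X] = [set blambda b (f x) | b in [set: B]] ->
  brace_gen (f x) = [set: B] -> cs_gen op x = [set: X].
Proof.
move=> finj fhom forb fgen; apply/eqP; rewrite eqEsubset subsetT /=.
apply/bigcapsP=> S /andP[Scs xS]; apply/subsetP=> y _.
have Ylam := blambda_image_sub_cycle_set fhom Scs.
have fxY : f x \in f @: S by rewrite imset_f.
have spanT : addspan (f @: S) = [set: B].
  apply/eqP; rewrite eqEsubset subsetT -fgen brace_gen_min ?addspan_bi_subgroup //.
  exact: subsetP (subset_addspan _) _ fxY.
have /imsetP[b _ fyE] : f y \in [set blambda b (f x) | b in [set: B]].
  by rewrite -forb imset_f.
have : f y \in f @: S by rewrite fyE addspan_blambda ?spanT.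
by case/imsetP=> s sS /finj ->.
Qed.

Section SubBrace.
Variables (B : brace) (S : {set B}).
Hypothesis Sbi : bi_subgroup S.

Let S0 : bzero B \in S. Proof. by case/bi_subgroupP: Sbi => [[]]. Qed.
Let SD a b : a \in S -> b \in S -> badd a b \in S.
Proof. by case/bi_subgroupP: Sbi => [[_ SD _] _]; apply: SD. Qed.
Let SN a : a \in S -> bopp a \in S.
Proof. by case/bi_subgroupP: Sbi => [[_ _ SN] _]; apply: SN. Qed.
Let S1 : bone B \in S. Proof. by case/bi_subgroupP: Sbi => _ []. Qed.
Let SM a b : a \in S -> b \in S -> bcirc a b \in S.
Proof. by case/bi_subgroupP: Sbi => _ [_ SM _]; apply: SM. Qed.
Let SV a : a \in S -> binv a \in S.
Proof. by case/bi_subgroupP: Sbi => _ [_ _ SV]; apply: SV. Qed.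

Definition sub_brace_type : finType := {b : B | b \in S}.

Definition sub_brace : brace.
refine (@Brace sub_brace_type
  (fun a b => exist _ (badd (val a) (val b)) (SD (valP a) (valP b)))
  (fun a => exist _ (bopp (val a)) (SN (valP a)))
  (exist _ (bzero B) S0)
  (fun a b => exist _ (bcirc (val a) (val b)) (SM (valP a) (valP b)))
  (fun a => exist _ (binv (val a)) (SV (valP a)))
  (exist _ (bone B) S1) _ _ _ _ _ _ _ _) => *; apply: val_inj => /=.
- exact: baddA.
- exact: baddC.
- exact: badd0.
- exact: baddN.
- exact: bcircA.
- exact: bcirc1.
- exact: bcircV.
- exact: bdistr.
Defined.

Lemma val_sub_brace_blambda (a b : sub_brace) : val (blambda a b) = blambda (val a) (val b).
Proof. by []. Qed.

Lemma val_sub_brace_bi_subgroup (T : {set sub_brace}) :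
  bi_subgroup T -> bi_subgroup [set val t | t in T].
Proof.
case/bi_subgroupP=> [[T0 TD TN] [T1 TM TV]].
apply/bi_subgroupP; split; split;
  try move=> _ _ /imsetP[a aT ->] /imsetP[b bT ->];
  try move=> _ /imsetP[a aT ->].
- exact: imset_f T0.
- exact: imset_f (TD a b aT bT).
- exact: imset_f (TN a aT).
- exact: imset_f T1.
- exact: imset_f (TM a b aT bT).
- exact: imset_f (TV a aT).
Qed.

Lemma sub_brace_gen (x : B) (u : sub_brace) :
  S = brace_gen x -> val u = x -> brace_gen u = [set: sub_brace].
Proof.
move=> SE ux; apply/eqP; rewrite eqEsubset subsetT /=.
apply/bigcapsP=> T /andP[Tbi uT]; apply/subsetP=> v _.
have genT : brace_gen x \subset [set val t | t in T].
  by rewrite brace_gen_min ?val_sub_brace_bi_subgroup // -ux imset_f.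
have /(subsetP genT) : val v \in brace_gen x by rewrite -SE (valP v).
by case/imsetP=> t tT /val_inj ->.
Qed.

End SubBrace.

Lemma iter_card_fact (T : finType) (F : T -> T) (a : T) k :
  #|T| <= k -> iter (#|T|`! + k) F a = iter k F a.
Proof.
move=> Tk; pose g (i : 'I_#|T|.+1) := iter i F a.
have /injectivePn[i [j neq_ij]] : ~~ injectiveb g.
  by apply/injectiveP=> /leq_card; rewrite card_ord ltnn.
rewrite /g => {g} eq_ij.
wlog lt_ij : i j neq_ij eq_ij / i < j.
  move=> W; case: (ltngtP i j) => [|lt_ji|/val_inj eq]; first exact: W.
    by apply: (W j i); rewrite // eq_sym.
  by rewrite eq eqxx in neq_ij.
have per n : i <= n -> iter (j - i + n) F a = iter n F a.
  move=> le_in; rewrite -(subnKC le_in) addnA subnK; last exact: ltnW.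
  by rewrite addnC iterD -eq_ij -iterD addnC.
have /dvdnP[m ->] : j - i %| #|T|`!.
  by apply: dvdn_fact; rewrite subn_gt0 lt_ij (leq_trans (leq_subr _ _)) // -ltnS.
elim: m => [|m IH]; first by rewrite mul0n add0n.
have iT : i <= #|T| by rewrite -ltnS.
by rewrite mulSn -addnA per ?IH // (leq_trans iT) // (leq_trans Tk) ?leq_addl.
Qed.

Lemma perm_count_mem (T : eqType) (s1 s2 : seq T) :
  (forall w, count_mem w s1 = count_mem w s2) -> perm_eq s1 s2.
Proof. by move=> eq_count; apply/allP=> w _; apply/eqP/eq_count. Qed.

Lemma filter_pred1 (T : eqType) (s : seq T) y : filter (pred1 y) s = nseq (count_mem y s) y.
Proof. by elim: s => //= z s ->; case: eqP => [->|]. Qed.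

Definition mseq (T : finType) (m : T -> nat) : seq T := flatten [seq nseq (m y) y | y <- enum T].

Lemma count_mseq (T : finType) (m : T -> nat) w : count_mem w (mseq m) = m w.
Proof.
rewrite count_flatten sumnE !big_map (bigD1_seq w) -?enumT ?mem_enum ?enum_uniq //.
rewrite count_nseq /= eqxx mul1n big1 ?addn0 // => y neq_yw.
by rewrite count_nseq /= (negbTE neq_yw).
Qed.

Lemma count_map_perm (T : finType) (t : {perm T}) w s :
  count_mem w (map t s) = count_mem ((t^-1)%g w) s.
Proof.
by rewrite count_map; apply: eq_count=> z /=; rewrite -{1}(permKV t w) (inj_eq perm_inj).
Qed.

Lemma perm_foldl (T : eqType) (R : Type) (f : R -> T -> R) :
  (forall z y1 y2, f (f z y1) y2 = f (f z y2) y1) ->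
  forall s1 s2 z, perm_eq s1 s2 -> foldl f z s1 = foldl f z s2.
Proof.
move=> fC; elim=> [|y s1 IH] s2 z; first by rewrite perm_sym => /perm_nilP ->.
move=> eq_s; have ys2 : y \in s2 by rewrite -(perm_mem eq_s) mem_head.
move: eq_s; case/splitPr: ys2 => l r eq_s.
have -> : foldl f z (l ++ y :: r) = foldl f (f z y) (l ++ r).
  by elim: l z {eq_s} => //= u l IHl z; rewrite IHl fC.
apply: IH; rewrite -(perm_cons y); apply: perm_trans eq_s _.
by rewrite -cat1s perm_catCA.
Qed.

Lemma foldl_nseq (T R : Type) (f : R -> T -> R) z y k :
  foldl f z (nseq k y) = iter k (f^~ y) z.
Proof. by elim: k z => //= k IH z; rewrite IH -iterSr. Qed.

Section StructureBrace.
Variables (X : finType) (op : X -> X -> X).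
Hypothesis Xcs : is_cycle_set op.

Lemma cs_op_inj y : injective (op y).
Proof. by case: Xcs => op_bij _; apply: bij_inj. Qed.

Definition cs_sigma y : {perm X} := perm (@cs_op_inj y).

Lemma cs_sigmaE y z : cs_sigma y z = op y z.
Proof. exact: permE. Qed.

(* [sigma_seq s] is the permutation sigma_a of the structure brace at a = sum of
   the e_y for y in s, computed by sigma_(a + e_y) = sigma_a sigma_(sigma_a y);
   products in [{perm X}] compose from left to right. *)
Definition sigma_step (t : {perm X}) y : {perm X} := (t * cs_sigma (t y))%g.

Definition sigma_seq (s : seq X) : {perm X} := foldl sigma_step 1%g s.

Lemma sigma_stepC t y z : sigma_step (sigma_step t y) z = sigma_step (sigma_step t z) y.
Proof.
rewrite /sigma_step -!mulgA; congr (t * _)%g; apply/permP=> w.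
by rewrite !permM !cs_sigmaE; case: Xcs => _ ->.
Qed.

Lemma sigma_seq1 y : sigma_seq [:: y] = cs_sigma y.
Proof. by rewrite /sigma_seq /= /sigma_step mul1g perm1. Qed.

Lemma sigma_seq_perm s1 s2 : perm_eq s1 s2 -> sigma_seq s1 = sigma_seq s2.
Proof. exact: perm_foldl sigma_stepC s1 s2 1%g. Qed.

Lemma foldl_sigma_step_mul t r s :
  foldl sigma_step (t * r)%g s = (t * foldl sigma_step r (map t s))%g.
Proof. by elim: s r => //= y s IH r; rewrite -IH /sigma_step permM mulgA. Qed.

Lemma sigma_seq_cat s1 s2 :
  sigma_seq (s1 ++ s2) = (sigma_seq s1 * sigma_seq (map (sigma_seq s1) s2))%g.
Proof. by rewrite /sigma_seq foldl_cat -[X in foldl _ X]mulg1 foldl_sigma_step_mul. Qed.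

Local Notation N := #|{perm X}|.

Lemma sigma_seq_padr s y : N <= count_mem y s -> sigma_seq (s ++ nseq N`! y) = sigma_seq s.
Proof.
move=> Ns; have split_s : perm_eq s (nseq (count_mem y s) y ++ filter (predC (pred1 y)) s).
  by rewrite perm_sym -filter_pred1 perm_filterC.
have /sigma_seq_perm -> :
    perm_eq (s ++ nseq N`! y) (nseq (N`! + count_mem y s) y ++ filter (predC (pred1 y)) s).
  by rewrite nseqD -catA perm_catC perm_cat2l.
rewrite (sigma_seq_perm split_s) !sigma_seq_cat /sigma_seq !foldl_nseq.
by rewrite iter_card_fact.
Qed.

Lemma sigma_seq_pad s (m : X -> nat) : (forall y, N <= count_mem y s) ->
  sigma_seq (s ++ mseq (fun y => N`! * m y)) = sigma_seq s.
Proof.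
rewrite /mseq; elim: (enum X) s => [|z zs IH] s Ns /=; first by rewrite cats0.
rewrite catA IH => [|y]; last by rewrite count_cat (leq_trans (Ns y)) ?leq_addr.
elim: (m z) => [|k IHk]; first by rewrite muln0 cats0.
rewrite mulnSr nseqD catA sigma_seq_padr ?IHk //.
by rewrite count_cat (leq_trans (Ns z)) ?leq_addr.
Qed.

Lemma sigma_seq_congr s1 s2 :
  (forall y, N <= count_mem y s1) -> (forall y, N <= count_mem y s2) ->
  (forall y, count_mem y s1 = count_mem y s2 %[mod N`!]) -> sigma_seq s1 = sigma_seq s2.
Proof.
move=> Ns1 Ns2 eq_mod.
rewrite -(sigma_seq_pad (fun y => count_mem y s2 %/ N`!) Ns1).
rewrite -(sigma_seq_pad (fun y => count_mem y s1 %/ N`!) Ns2).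
apply/sigma_seq_perm/perm_count_mem=> y; rewrite !count_cat !count_mseq.
by rewrite {1}(divn_eq (count_mem y s1) N`!) {2}(divn_eq (count_mem y s2) N`!) eq_mod; lia.
Qed.

(* The period N`! is doubled so that the modulus exceeds 1: ['Z_n] is ['Z_2]
   for n <= 1. *)
Local Notation M := (N`!).*2.

Lemma modulus_gt1 : 1 < M.
Proof. by have := fact_gt0 N; rewrite -addnn; lia. Qed.

Lemma dvdn_fact_modulus : N`! %| M.
Proof. by rewrite -muln2 dvdn_mulr. Qed.

Lemma val_ZpD (i j : 'Z_M) : nat_of_ord (i + j)%R = i + j %[mod N`!].
Proof.
have -> : nat_of_ord (i + j)%R = (i + j) %% M.
  by rewrite /=; congr (_ %% _); apply: Zp_cast modulus_gt1.
by rewrite modn_dvdm // dvdn_fact_modulus.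
Qed.

Definition csb_type := {ffun X -> 'Z_M}.

(* The shift puts every multiplicity past the preperiod N of [sigma_seq]
   without changing it modulo N`!. *)
Local Notation offset := (N * N`!).

Lemma offset_ge : N <= offset.
Proof. by rewrite leq_pmulr ?fact_gt0. Qed.

Definition csb_seq (a : csb_type) : seq X := mseq (fun y => a y + offset).

Definition csb_sigma (a : csb_type) : {perm X} := sigma_seq (csb_seq a).

Lemma count_csb_seq a w : count_mem w (csb_seq a) = a w + offset.
Proof. exact: count_mseq. Qed.

Lemma csb_sigma_eq s (a : csb_type) : (forall w, N <= count_mem w s) ->
  (forall w, count_mem w s = a w %[mod N`!]) -> sigma_seq s = csb_sigma a.
Proof.
move=> Ns eq_mod; apply: sigma_seq_congr => // w; rewrite count_csb_seq.
  by rewrite (leq_trans offset_ge) ?leq_addl.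
by rewrite eq_mod addnC modnMDl.
Qed.

Local Open Scope ring_scope.
Implicit Types a b c : csb_type.

(* sigma_0 = sigma_0 sigma_0, as doubling the multiplicities of 0 only adds
   multiples of N`! to them. *)
Lemma csb_sigma0 : csb_sigma 0 = 1%g.
Proof.
have shift0 : perm_eq (map (csb_sigma 0) (csb_seq 0)) (csb_seq 0).
  by apply: perm_count_mem=> w; rewrite count_map_perm !count_csb_seq !ffunE.
have : sigma_seq (csb_seq 0 ++ csb_seq 0) = csb_sigma 0.
  apply csb_sigma_eq => w; rewrite count_cat count_csb_seq ffunE /= add0n.
    by rewrite (leq_trans offset_ge) ?leq_addr.
  by rewrite -mulnDl modnMl mod0n.
rewrite sigma_seq_cat (sigma_seq_perm shift0) => /esym.
by rewrite -[X in X = _]mulg1 => /mulgI.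
Qed.

Definition csb_lambda a b : csb_type := [ffun w => b (csb_sigma a w)].

Definition csb_circ a b : csb_type := a + csb_lambda a b.

Lemma csb_sigma_circ a b : csb_sigma (csb_circ a b) = (csb_sigma a * csb_sigma b)%g.
Proof.
set s := csb_sigma a.
have <- : sigma_seq (csb_seq a ++ map s^-1%g (csb_seq b)) = (s * csb_sigma b)%g.
  by rewrite sigma_seq_cat -map_comp (eq_map (permKV s)) map_id.
symmetry; apply: csb_sigma_eq => w.
  rewrite count_cat (leq_trans _ (leq_addr _ _)) // count_csb_seq.
  by rewrite (leq_trans offset_ge) ?leq_addl.
rewrite count_cat count_map_perm invgK !count_csb_seq.
rewrite /csb_circ /csb_lambda !ffunE val_ZpD -/s.
by rewrite addnACA -mulnDl addnC modnMDl.
Qed.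

Lemma csb_lambdaD a b c : csb_lambda a (b + c) = csb_lambda a b + csb_lambda a c.
Proof. by apply/ffunP=> w; rewrite !ffunE. Qed.

Lemma csb_lambda_circ a b c : csb_lambda (csb_circ a b) c = csb_lambda a (csb_lambda b c).
Proof. by apply/ffunP=> w; rewrite !ffunE csb_sigma_circ permM. Qed.

Lemma csb_lambda0 b : csb_lambda 0 b = b.
Proof. by apply/ffunP=> w; rewrite ffunE csb_sigma0 perm1. Qed.

Definition csb_inv a : csb_type := - [ffun w => a ((csb_sigma a)^-1%g w)].

Lemma csb_circVr a : csb_circ a (csb_inv a) = 0.
Proof. by apply/ffunP=> w; rewrite !ffunE permK addrN. Qed.

Lemma csb_sigmaV a : csb_sigma (csb_inv a) = (csb_sigma a)^-1%g.
Proof.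
apply: (@mulgI _ (csb_sigma a)).
by rewrite -csb_sigma_circ csb_circVr csb_sigma0 mulgV.
Qed.

Lemma csb_circV a : csb_circ (csb_inv a) a = 0.
Proof. by apply/ffunP=> w; rewrite !ffunE csb_sigmaV addNr. Qed.

Lemma csb_circ0 a : csb_circ 0 a = a.
Proof. by rewrite /csb_circ csb_lambda0 add0r. Qed.

Lemma csb_circA a b c : csb_circ a (csb_circ b c) = csb_circ (csb_circ a b) c.
Proof. by rewrite /csb_circ csb_lambdaD csb_lambda_circ addrA. Qed.

Lemma csb_circD a b c : csb_circ a (b + c) = csb_circ a b - a + csb_circ a c.
Proof. by rewrite /csb_circ csb_lambdaD (addrC a (csb_lambda a b)) addrK addrCA. Qed.

Definition cs_brace : brace :=
  @Brace csb_type (fun a b => a + b) (fun a => - a) 0 csb_circ csb_inv 0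
    (@addrA _) (@addrC _) (@add0r _) (@addNr _) csb_circA csb_circ0 csb_circV csb_circD.

Lemma cs_brace_blambda (a b : cs_brace) : blambda a b = csb_lambda a b.
Proof. by rewrite /blambda /= /csb_circ addKr. Qed.

Definition csb_unit y : csb_type := [ffun w => (w == y)%:R].

Lemma csb_unit_inj : injective csb_unit.
Proof.
move=> y z /ffunP/(_ y); rewrite !ffunE eqxx.
by case: eqP => // _ /eqP; rewrite oner_eq0.
Qed.

Lemma csb_lambda_unit a z : csb_lambda a (csb_unit z) = csb_unit ((csb_sigma a)^-1%g z).
Proof.
by apply/ffunP=> w; rewrite !ffunE -{1}(permKV (csb_sigma a) z) (inj_eq perm_inj).
Qed.

Lemma csb_sigma_unit y : csb_sigma (csb_unit y) = cs_sigma y.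
Proof.
have <- : sigma_seq (csb_seq 0 ++ [:: y]) = cs_sigma y.
  by rewrite sigma_seq_cat -/(csb_sigma 0) csb_sigma0 mul1g /= perm1 sigma_seq1.
symmetry; apply: (csb_sigma_eq (a := csb_unit y)) => w.
  by rewrite count_cat count_csb_seq ffunE (leq_trans offset_ge) ?leq_addl ?leq_addr.
rewrite count_cat count_csb_seq !ffunE /= add0n addn0 modnMDl eq_sym.
by rewrite val_Zp_nat ?modulus_gt1 // modn_dvdm ?dvdn_fact_modulus.
Qed.

Lemma csb_unit_hom y z :
  csb_unit (op y z) = bcs_op (B := cs_brace) (csb_unit y) (csb_unit z).
Proof.
by rewrite /bcs_op cs_brace_blambda /= csb_lambda_unit csb_sigmaV invgK csb_sigma_unit cs_sigmaE.
Qed.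

End StructureBrace.

Section BraceOfGeneratedCycleSet.
Variables (X : finType) (op : X -> X -> X) (x : X).
Hypothesis Xcs : is_cycle_set op.
Hypothesis Xgen : cs_gen op x = [set: X].

Local Notation e := (@csb_unit X : X -> cs_brace Xcs).
Local Notation G := (brace_gen (e x)).

Definition brace_orbit : {set X} := [set y | [exists b in G, blambda b (e x) == e y]].

Lemma brace_orbitP y :
  reflect (exists2 b, b \in G & blambda b (e x) = e y) (y \in brace_orbit).
Proof. by rewrite inE; apply: (iffP exists_inP) => -[b bG /eqP]; exists b. Qed.

Lemma mem_brace_gen_unit y : y \in brace_orbit -> e y \in G.
Proof.
case/brace_orbitP=> b bG <-.
by rewrite bi_subgroup_blambda ?brace_gen_bi_subgroup ?mem_brace_gen.
Qed.

Lemma x_in_brace_orbit : x \in brace_orbit.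
Proof.
have /bi_subgroupP[_ [G1 _ _]] := brace_gen_bi_subgroup (e x).
by apply/brace_orbitP; exists (bone _); rewrite ?blambda1.
Qed.

Lemma brace_orbit_sub_cycle_set : sub_cycle_set op brace_orbit.
Proof.
have /bi_subgroupP[_ [_ GM GV]] := brace_gen_bi_subgroup (e x).
apply/sub_cycle_setP; split.
- by apply/set0Pn; exists x; apply: x_in_brace_orbit.
- move=> y z yS /brace_orbitP[b bG bE]; apply/brace_orbitP.
  exists (bcirc (binv (e y)) b); first by rewrite GM ?GV ?mem_brace_gen_unit.
  by rewrite blambdaM bE csb_unit_hom.
- by move=> y z w _ _ _ /(cs_op_inj Xcs).
- move=> y w yS /brace_orbitP[b bG bE].
  set z := (cs_sigma Xcs y)^-1%g w.
  have yzE : op y z = w by rewrite -cs_sigmaE permKV.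
  exists z => //; apply/brace_orbitP; exists (bcirc (e y) b).
    by rewrite GM ?mem_brace_gen_unit.
  by rewrite blambdaM bE -yzE csb_unit_hom blambdaK.
Qed.

Lemma in_brace_orbit y : y \in brace_orbit.
Proof.
have := cs_gen_min brace_orbit_sub_cycle_set x_in_brace_orbit.
by rewrite Xgen => /subsetP; apply.
Qed.

Lemma brace_of_cs_gen : exists (B : brace) (f : X -> B),
  [/\ injective f, (forall y z, f (op y z) = bcs_op (f y) (f z)),
      f @: [set: X] = [set blambda b (f x) | b in [set: B]] &
      brace_gen (f x) = [set: B]].
Proof.
pose f y : sub_brace (brace_gen_bi_subgroup (e x)) :=
  exist _ (e y) (mem_brace_gen_unit (in_brace_orbit y)).
exists (sub_brace (brace_gen_bi_subgroup (e x))), f; split.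
- by move=> y z /(congr1 val) /csb_unit_inj.
- by move=> y z; apply: val_inj; rewrite /= csb_unit_hom.
- apply/setP=> u; apply/imsetP/imsetP=> -[y _ ->].
    have /brace_orbitP[b bG bE] := in_brace_orbit y.
    by exists (exist _ b bG) => //; apply: val_inj; rewrite val_sub_brace_blambda bE.
  exists ((csb_sigma Xcs (val y))^-1%g x) => //.
  by apply: val_inj; rewrite val_sub_brace_blambda cs_brace_blambda csb_lambda_unit.
- exact: sub_brace_gen.
Qed.

End BraceOfGeneratedCycleSet.

Theorem mainTheorem6 (X : finType) (op : X -> X -> X) (x : X) :
  is_cycle_set op ->
  (cs_gen op x = [set: X] <->
   exists (B : brace) (f : X -> B),
     [/\ injective f,
         (forall y z, f (op y z) = bcs_op (f y) (f z)),
         f @: [set: X] = [set blambda b (f x) | b in [set: B]] &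
         brace_gen (f x) = [set: B]]).
Proof.
move=> Xcs; split; first exact: brace_of_cs_gen.
by case=> B [f [finj fhom forb fgen]]; apply: cs_gen_of_brace finj fhom forb fgen.
Qed.
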